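(* Let $V\in\mathbb{R}^{d\times d}$ be symmetric positive definite, let $\hat\theta\in\mathbb{R}^d$ and $\beta\ge 0$, and let $\mathcal{E}=\{\theta\in\mathbb{R}^d:\|\theta-\hat\theta\|_V\le\beta\}$. Assume $\|\hat\theta\|_V>\beta$ and put $\phi=\sqrt{\|\hat\theta\|_V^2-\beta^2}>0$. Then $0\notin\mathcal{E}$, and for every $\theta\in\mathcal{E}$, $$\Big\|\tfrac{\theta}{\|\theta\|}\Big\|_V\le\frac{\|\hat\theta\|_{V^2}}{\phi}.$$
   Context: $\|\cdot\|$ is the Euclidean norm. For a symmetric positive definite matrix $A$, $\|x\|_A=\sqrt{x^\top Ax}$; in particular $\|\hat\theta\|_{V^2}=\sqrt{\hat\theta^\top V^2\hat\theta}=\|V\hat\theta\|$. The vector $\theta/\|\theta\|$ is the maximizer of $x\mapsto\langle x,\theta\rangle$ over the unit sphere $\{x:\|x\|=1\}$. *)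

From HB Require Import structures.
From mathcomp Require Import all_boot all_order all_algebra.
Set Implicit Arguments. Unset Strict Implicit. Unset Printing Implicit Defensive.
Import Order.TTheory GRing.Theory Num.Theory.
Local Open Scope ring_scope.

Definition qform (R : ringType) (d : nat) (A : 'M[R]_d) (x : 'cV[R]_d) : R :=
  (x^T *m A *m x) 0 0.

Definition mnorm (R : rcfType) (d : nat) (A : 'M[R]_d) (x : 'cV[R]_d) : R :=
  Num.sqrt (qform A x).

Definition enorm (R : rcfType) (d : nat) (x : 'cV[R]_d) : R :=
  Num.sqrt (\sum_(i < d) x i 0 ^+ 2).

Definition spd (R : numDomainType) (d : nat) (A : 'M[R]_d) : Prop :=
  A^T = A /\ forall x : 'cV[R]_d, x != 0 -> 0 < qform A x.

Definition ellipsoid (R : rcfType) (d : nat) (V : 'M[R]_d) (thetahat : 'cV[R]_d)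
  (beta : R) : 'cV[R]_d -> Prop :=
  fun theta => mnorm V (theta - thetahat) <= beta.

From mathcomp Require Import all_boot all_order all_algebra.
From mathcomp Require Import ring lra.
Set Implicit Arguments. Unset Strict Implicit. Unset Printing Implicit Defensive.
Import Order.TTheory GRing.Theory Num.Theory.
Local Open Scope ring_scope.

(* Let qa = ||theta||_V^2, qb = ||thetahat||_V^2 and c = theta^T V thetahat.
   For theta in the ellipsoid, expanding ||theta - thetahat||_V^2 <= beta^2
   gives qa + phi^2 <= 2c with phi^2 = qb - beta^2, hence by AM-GM
   ||theta||_V * phi <= c.  On the other hand c = <theta, V thetahat>, so the
   Euclidean Cauchy-Schwarz inequality gives c <= ||theta|| * ||thetahat||_{V^2}.
   Dividing by ||theta|| * phi yields the bound on ||theta/||theta|| ||_V. *)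

Definition bform {R : pzRingType} {d : nat} (A : 'M[R]_d) (x y : 'cV[R]_d) : R :=
  (x^T *m A *m y) 0 0.

Section BilinearForm.
Variables (R : comNzRingType) (d : nat) (A : 'M[R]_d).

Lemma bformC (x y : 'cV[R]_d) : A^T = A -> bform A x y = bform A y x.
Proof.
move=> symA; have tr : (y^T *m A *m x)^T = x^T *m A *m y.
  by rewrite !trmx_mul trmxK symA mulmxA.
by rewrite /bform -tr mxE.
Qed.

Lemma bformZr (k : R) (x y : 'cV[R]_d) : bform A x (k *: y) = k * bform A x y.
Proof. by rewrite /bform -scalemxAr mxE. Qed.

Lemma qformZ (k : R) (x : 'cV[R]_d) : qform A (k *: x) = k ^+ 2 * qform A x.
Proof.
rewrite /qform linearZ /= [(k *: x)^T]linearZ /= -!scalemxAl !mxE.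
by rewrite expr2 mulrA.
Qed.

Lemma qformB (x y : 'cV[R]_d) : A^T = A ->
  qform A (x - y) = qform A x - 2 * bform A x y + qform A y.
Proof.
move=> symA; have yx := bformC y x symA.
rewrite /qform /bform in yx *; rewrite [(x - y)^T]linearB /= !mulmxBl !mulmxBr.
by rewrite !mxE in yx *; rewrite yx; ring.
Qed.

Lemma bform_mulmx (x y : 'cV[R]_d) : bform A x y = bform 1%:M x (A *m y).
Proof. by rewrite /bform mulmx1 mulmxA. Qed.

Lemma qform_mulmx (y : 'cV[R]_d) : A^T = A ->
  qform 1%:M (A *m y) = qform (A *m A) y.
Proof. by move=> symA; rewrite /qform mulmx1 trmx_mul symA !mulmxA. Qed.

End BilinearForm.

Lemma qform1 (R : comNzRingType) (d : nat) (x : 'cV[R]_d) :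
  qform 1%:M x = \sum_i x i 0 ^+ 2.
Proof.
rewrite /qform mulmx1 mxE; apply: eq_bigr => i _.
by rewrite mxE expr2.
Qed.

Lemma enorm_mnorm1 (R : rcfType) (d : nat) (x : 'cV[R]_d) :
  enorm x = mnorm 1%:M x.
Proof. by rewrite /mnorm qform1. Qed.

Lemma mnormZ (R : rcfType) (d : nat) (A : 'M[R]_d) (k : R) (x : 'cV[R]_d) :
  mnorm A (k *: x) = `|k| * mnorm A x.
Proof. by rewrite /mnorm qformZ sqrtrM ?sqr_ge0 // sqrtr_sqr. Qed.

Lemma spd_qform_ge0 (R : numDomainType) (d : nat) (A : 'M[R]_d)
  (x : 'cV[R]_d) : spd A -> 0 <= qform A x.
Proof.
move=> [_ posA]; have [->|/posA/ltW //] := eqVneq x 0.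
by rewrite /qform !mulmx0 mxE.
Qed.

Lemma nonneg_quadratic_discr (R : realFieldType) (a b c : R) : 0 <= a ->
  (forall t, 0 <= c - 2 * t * b + t ^+ 2 * a) -> b ^+ 2 <= a * c.
Proof.
move=> a_ge0 nonneg; have [a0|a_neq0] := eqVneq a 0.
  rewrite a0 mul0r; have [b0|b_neq0] := eqVneq b 0; first by rewrite b0 expr0n.
  have := nonneg ((c + 1) / (2 * b)); rewrite a0 mulr0 addr0.
  have -> : c - 2 * ((c + 1) / (2 * b)) * b = - 1.
    by field; rewrite b_neq0.
  by rewrite oppr_ge0 ler10.
have a_gt0 : 0 < a by rewrite lt_def a_neq0.
have := nonneg (b / a).
have -> : c - 2 * (b / a) * b + (b / a) ^+ 2 * a = c - b ^+ 2 / a.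
  by field; rewrite a_neq0.
by rewrite subr_ge0 ler_pdivrMr // mulrC.
Qed.

Lemma cauchy_schwarz (R : realFieldType) (d : nat) (A : 'M[R]_d)
  (x y : 'cV[R]_d) : A^T = A -> (forall z, 0 <= qform A z) ->
  bform A x y ^+ 2 <= qform A x * qform A y.
Proof.
move=> symA psdA; apply: nonneg_quadratic_discr => [|t]; first exact: psdA.
have := psdA (y - t *: x).
by rewrite qformB // qformZ bformZr mulrA (bformC x).
Qed.

(* Euclidean Cauchy-Schwarz applied to <x, A y>. *)
Lemma bform_le_enorm (R : rcfType) (d : nat) (A : 'M[R]_d)
  (x y : 'cV[R]_d) : A^T = A -> bform A x y <= enorm x * mnorm (A *m A) y.
Proof.
move=> symA; have psd1 (z : 'cV[R]_d) : 0 <= qform 1%:M z.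
  by rewrite qform1; apply: sumr_ge0 => i _; apply: sqr_ge0.
rewrite enorm_mnorm1 /mnorm -qform_mulmx // -sqrtrM // bform_mulmx.
apply: le_trans (ler_wsqrtr (cauchy_schwarz x (A *m y) (trmx1 _ _) psd1)).
by rewrite sqrtr_sqr ler_norm.
Qed.

Lemma ellipsoid_bform_lb (R : rcfType) (d : nat) (V : 'M[R]_d)
  (thetahat theta : 'cV[R]_d) (beta : R) : spd V -> 0 <= beta ->
  beta ^+ 2 <= qform V thetahat -> ellipsoid V thetahat beta theta ->
  mnorm V theta * Num.sqrt (qform V thetahat - beta ^+ 2)
    <= bform V theta thetahat.
Proof.
move=> spdV beta_ge0 beta_le inE; have symV := proj1 spdV.
set phi := Num.sqrt _; set c := bform V theta thetahat.
have phi2 : phi ^+ 2 = qform V thetahat - beta ^+ 2.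
  by rewrite sqr_sqrtr // subr_ge0.
have dist2 : qform V (theta - thetahat) <= beta ^+ 2.
  rewrite -(sqr_sqrtr (spd_qform_ge0 _ spdV)).
  by rewrite lerXn2r // ?nnegrE ?sqrtr_ge0.
have theta2 : mnorm V theta ^+ 2 = qform V theta.
  by rewrite sqr_sqrtr // spd_qform_ge0.
(* dist2 expands to qa + phi^2 <= 2c; conclude by 2 sqrt(qa) phi <= qa + phi^2. *)
have amgm := sqr_ge0 (mnorm V theta - phi).
rewrite qformB // -/c in dist2; nra.
Qed.

Theorem lemma1 (R : rcfType) (d : nat) (V : 'M[R]_d) (thetahat : 'cV[R]_d)
  (beta : R) :
  spd V -> 0 <= beta -> beta < mnorm V thetahat ->
  let phi := Num.sqrt (mnorm V thetahat ^+ 2 - beta ^+ 2) in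
  0 < phi /\ ~ ellipsoid V thetahat beta 0 /\
  (forall theta : 'cV[R]_d, ellipsoid V thetahat beta theta ->
     mnorm V ((enorm theta)^-1 *: theta) <= mnorm (V *m V) thetahat / phi).
Proof.
move=> spdV beta_ge0 beta_lt phi.
have norm2 : mnorm V thetahat ^+ 2 = qform V thetahat.
  by rewrite sqr_sqrtr // spd_qform_ge0.
have beta2_lt : beta ^+ 2 < qform V thetahat by rewrite -norm2 ltrXn2r.
have phi_gt0 : 0 < phi by rewrite sqrtr_gt0 norm2 subr_gt0.
split=> //; split.
  by rewrite /ellipsoid sub0r -scaleN1r mnormZ normrN1 mul1r leNgt beta_lt.
move=> theta inE; rewrite mnormZ ger0_norm ?invr_ge0 ?sqrtr_ge0 //.
have [->|enorm_neq0] := eqVneq (enorm theta) 0.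
  by rewrite invr0 mul0r divr_ge0 ?sqrtr_ge0 ?ltW.
have enorm_gt0 : 0 < enorm theta by rewrite lt_def enorm_neq0 sqrtr_ge0.
rewrite ler_pdivlMr // -mulrA ler_pdivrMl //.
apply: le_trans (bform_le_enorm _ _ (proj1 spdV)).
by rewrite /phi norm2; apply: ellipsoid_bform_lb => //; apply: ltW.
Qed.
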